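(* For any $\epsilon_{\mathrm{sim}}\le1/2$, there exist episodic MDPs $\mathcal{M}^{\mathsf{sim}},\mathcal{M}^{\mathsf{real},1},\mathcal{M}^{\mathsf{real},2}$ (sharing state space, finite action set, rewards, initial state and horizon) and a finite function class $\mathcal{F}$ such that: 1. Each of $\mathcal{M}^{\mathsf{real},1},\mathcal{M}^{\mathsf{real},2}$ satisfies $\|P^{\mathsf{real},i}_h(\cdot\mid s,a)-P^{\mathsf{sim}}_h(\cdot\mid s,a)\|_{\mathrm{TV}}\le\epsilon_{\mathrm{sim}}$ for all $(s,a,h)$; $\mathcal{M}^{\mathsf{sim}}$ and both real MDPs are low-rank MDPs of common dimension $d$; $\mathcal{M}^{\mathsf{sim}}$ satisfies reachability with some $\lambda_{\min}^\star>0$; and $\mathcal{F}$ is Bellman complete with respect to $\mathcal{M}^{\mathsf{sim}}$ and each real MDP. 2. There exists a policy $\pi_{\mathrm{exp}}$ such that $\lambda_{\min}(\mathbb{E}^{\mathcal{M}^{\mathsf{sim}},\pi_{\mathrm{exp}}}[\boldsymbol{\phi}^{\mathsf{s}}(s_h,a_h)\boldsymbol{\phi}^{\mathsf{s}}(s_h,a_h)^\top])=1/2$ for all $h\in[H]$, and for any $T\ge0$, if $\pi_{\mathrm{exp}}$ is played on the real MDP for $T$ steps (episodes), $$\inf_{\widehat{\pi}}\ \sup_{\mathcal{M}\in\{\mathcal{M}^{\mathsf{real},1},\mathcal{M}^{\mathsf{real},2}\}}\mathbb{E}^{\mathcal{M},\pi_{\mathrm{exp}}}\big[V_0^{\mathcal{M},\star}-V_0^{\mathcal{M},\widehat{\pi}}\big]\ge\epsilon_{\mathrm{sim}},$$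 where the infimum is over all rules mapping the collected data to a policy $\widehat{\pi}$.
   Context: Episodic MDP $(\mathcal{S},\mathcal{A},\{P_h\}_{h=1}^H,\{r_h\},s_1,H)$ with finite $\mathcal{A}$ and deterministic rewards in $[0,1]$; $V_0^{\mathcal{M},\pi}$ is the expected total reward of $\pi$ from $s_1$, $V_0^{\mathcal{M},\star}=\sup_\pi V_0^{\mathcal{M},\pi}$; $\mathbb{E}^{\mathcal{M},\pi}$ is expectation when playing $\pi$ on $\mathcal{M}$. Low-rank MDP of dimension $d$: $P_h(\cdot\mid s,a)=\langle\boldsymbol{\phi}(s,a),\boldsymbol{\mu}_h(\cdot)\rangle$ with $\|\boldsymbol{\phi}\|_2\le1$, $\|\int|\mathrm{d}\boldsymbol{\mu}_h|\|_2\le\sqrt d$; $\boldsymbol{\phi}^{\mathsf{s}}$ denotes the features of $\mathcal{M}^{\mathsf{sim}}$. Reachability: $\min_h\sup_\pi\lambda_{\min}(\mathbb{E}^{\mathcal{M}^{\mathsf{sim}},\pi}[\boldsymbol{\phi}^{\mathsf{s}}\boldsymbol{\phi}^{\mathsf{s}\top}])\ge\lambda_{\min}^\star$. $\mathcal{F}=\prod_h\mathcal{F}_h$, $\mathcal{F}_h\subseteq\{\mathcal{S}\times\mathcal{A}\to[0,H]\}$, $f_{H+1}=0$; $\mathcal{T}f_{h+1}(s,a)=r_h(s,a)+\mathbb{E}_{s'\sim P_h(\cdot|s,a)}\max_{a'}f_{h+1}(s',a')$; Bellman complete: $\mathcal{T}f_{h+1}\in\mathcal{F}_h$ for all $f_{h+1}\in\mathcal{F}_{h+1}$.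 *)

From HB Require Import structures.
From mathcomp Require Import all_boot all_order all_algebra.
From mathcomp Require Import boolp classical_sets reals.
Set Implicit Arguments. Unset Strict Implicit. Unset Printing Implicit Defensive.
Import Order.TTheory GRing.Theory Num.Theory.
Local Open Scope ring_scope.

Section EpisodicMDP.
Variable R : realType.
Variables S A : finType.
Variable H : nat.  (* horizon; steps are indexed h = 0, ..., H-1 *)

(* P h s a s' = P_h(s' | s, a);  r h s a = r_h(s,a);  pi h s a = pi_h(a | s). *)
Definition kernel := nat -> S -> A -> S -> R.
Definition reward := nat -> S -> A -> R.
Definition policy := nat -> S -> A -> R.

Definition is_kernel (P : kernel) : Prop :=
  forall h, (h < H)%N -> forall s a,
    (forall s', 0 <= P h s a s') /\ \sum_(s' : S) P h s a s' = 1.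

Definition is_reward (r : reward) : Prop :=
  forall h, (h < H)%N -> forall s a, 0 <= r h s a <= 1.

Definition is_policy (pi : policy) : Prop :=
  forall h, (h < H)%N -> forall s,
    (forall a, 0 <= pi h s a) /\ \sum_(a : A) pi h s a = 1.

(* A trajectory (s_1, a_1, ..., s_H, a_H, s_{H+1}) (0-based indices). *)
Definition traj := ({ffun 'I_H.+1 -> S} * {ffun 'I_H -> A})%type.
Definition st (tau : traj) (h : 'I_H) : S := tau.1 (widen_ord (leqnSn H) h).
Definition st_next (tau : traj) (h : 'I_H) : S := tau.1 (lift ord0 h).
Definition act (tau : traj) (h : 'I_H) : A := tau.2 h.

Definition traj_prob (s1 : S) (P : kernel) (pi : policy) (tau : traj) : R :=
  (tau.1 ord0 == s1)%:R *
  \prod_(h < H) (pi h (st tau h) (act tau h) *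
                 P h (st tau h) (act tau h) (st_next tau h)).

Definition value (s1 : S) (r : reward) (P : kernel) (pi : policy) : R :=
  \sum_(tau : traj) traj_prob s1 P pi tau * \sum_(h < H) r h (st tau h) (act tau h).

Definition Vstar (s1 : S) (r : reward) (P : kernel) : R :=
  sup [set v | exists pi, is_policy pi /\ v = value s1 r P pi].

Definition tv (p q : S -> R) : R :=
  \big[Num.max/0]_(E : {set S}) `|\sum_(s in E) (p s - q s)|.

Definition low_rank (d : nat) (P : kernel) (phi : S -> A -> 'cV[R]_d)
    (mu : nat -> S -> 'cV[R]_d) : Prop :=
  (forall h, (h < H)%N -> forall s a s',
     P h s a s' = \sum_(i < d) phi s a i 0 * mu h s' i 0) /\
  (forall s a, Num.sqrt (\sum_(i < d) (phi s a i 0) ^+ 2) <= 1) /\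
  (forall h, (h < H)%N ->
     Num.sqrt (\sum_(i < d) (\sum_(s' : S) `|mu h s' i 0|) ^+ 2)
       <= Num.sqrt (d%:R)).

Definition feat_cov (d : nat) (s1 : S) (P : kernel) (pi : policy)
    (phi : S -> A -> 'cV[R]_d) (h : 'I_H) : 'M[R]_d :=
  \sum_(tau : traj) traj_prob s1 P pi tau *:
     (phi (st tau h) (act tau h) *m (phi (st tau h) (act tau h))^T).

Definition is_lambda_min (d : nat) (M : 'M[R]_d) (l : R) : Prop :=
  eigenvalue M l /\ forall m, eigenvalue M m -> l <= m.

Definition reachable (d : nat) (s1 : S) (P : kernel) (phi : S -> A -> 'cV[R]_d)
    (lam : R) : Prop :=
  forall h : 'I_H, exists pi, is_policy pi /\
    exists l, is_lambda_min (feat_cov s1 P pi phi h) l /\ lam <= l.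

Definition maxA (a0 : A) (g : A -> R) : R := \big[Num.max/g a0]_(a : A) g a.

Definition bellman (a0 : A) (r : reward) (P : kernel) (h : nat)
    (f : {ffun S * A -> R}) : {ffun S * A -> R} :=
  [ffun sa => r h sa.1 sa.2 +
     \sum_(s' : S) P h sa.1 sa.2 s' * maxA a0 (fun a' => f (s', a'))].

(* F = prod_h F_h, each F_h finite with values in [0,H]; F_{H+1} = {0} *)
Definition fun_class (F : nat -> seq {ffun S * A -> R}) : Prop :=
  F H = [:: 0] /\
  forall h, (h < H)%N -> forall f, f \in F h -> forall sa, 0 <= f sa <= H%:R.

Definition bellman_complete (a0 : A) (r : reward) (P : kernel)
    (F : nat -> seq {ffun S * A -> R}) : Prop :=
  forall h, (h < H)%N -> forall f, f \in F h.+1 -> bellman a0 r P h f \in F h.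

Definition data (T : nat) := {ffun 'I_T -> traj}.
Definition data_prob (T : nat) (s1 : S) (P : kernel) (pi : policy) (D : data T) : R :=
  \prod_(t < T) traj_prob s1 P pi (D t).

Definition exp_subopt (T : nat) (s1 : S) (r : reward) (P : kernel)
    (pi_exp : policy) (est : data T -> policy) : R :=
  \sum_(D : data T) data_prob s1 P pi_exp D *
     (Vstar s1 r P - value s1 r P (est D)).

End EpisodicMDP.

From Pilot Require Import Defs.
From HB Require Import structures.
From mathcomp Require Import all_boot all_order all_algebra.
From mathcomp Require Import boolp classical_sets reals.
From mathcomp Require Import ring lra.
Import Order.TTheory GRing.Theory Num.Theory.
Local Open Scope ring_scope.
Set Implicit Arguments. Unset Strict Implicit. Unset Printing Implicit Defensive.

(* The real MDPs have horizon 2, states {false, true} and actions bool * bool.  At the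
   first step an action (true, b) pays 1/2 and reaches the state true with probability
   1/2 - dl if b and 1/2 + dl otherwise, while an action (false, b) pays nothing and
   reaches the state b for sure; at the second step the state true pays 1.  Taking
   dl = eps, dl = -eps for the real MDPs and dl = 0 for the simulator, each real MDP has
   optimal value at least 1 + eps, but the values of a fixed policy in the two real MDPs
   add up to at most 2.  The exploration policy only plays the actions (false, b), on
   which all three MDPs agree, so the data have the same law under both real MDPs, and
   Le Cam's two-point argument shows that no estimator is eps-optimal in both on average.
   The features (P(false | a), P(true | a)) make the MDPs low rank of dimension 2; under
   the exploration policy they are the two unit vectors, each with probability 1/2. *)

Section SumsOverFiniteFunctions.
Variables (V : nmodType) (T : finType).

Definition ffun2 (x y : T) : {ffun 'I_2 -> T} :=
  [ffun i : 'I_2 => if i == 0 :> nat then x else y].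
Definition ffun3 (x y z : T) : {ffun 'I_3 -> T} :=
  [ffun i : 'I_3 => if i == 0 :> nat then x else if i == 1 :> nat then y else z].

Lemma sum_ffun2 (F : {ffun 'I_2 -> T} -> V) :
  \sum_(f : {ffun 'I_2 -> T}) F f = \sum_x \sum_y F (ffun2 x y).
Proof.
rewrite pair_big /= (reindex (fun p : T * T => ffun2 p.1 p.2)) //.
exists (fun f : {ffun 'I_2 -> T} => (f ord0, f (inord 1))) => [[x y] _ | f _] /=.
  by rewrite !ffunE /= inordK.
by apply/ffunP => -[[|[|//]] i2]; rewrite ffunE /=; congr (f _); apply: val_inj; rewrite /= ?inordK.
Qed.

Lemma sum_ffun3 (F : {ffun 'I_3 -> T} -> V) :
  \sum_(f : {ffun 'I_3 -> T}) F f = \sum_x \sum_y \sum_z F (ffun3 x y z).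
Proof.
rewrite (eq_bigr (fun x => \sum_(p : T * T) F (ffun3 x p.1 p.2))); last by move=> x _; rewrite pair_big.
rewrite pair_big /= (reindex (fun p : T * (T * T) => ffun3 p.1 p.2.1 p.2.2)) //.
exists (fun f : {ffun 'I_3 -> T} => (f ord0, (f (inord 1), f (inord 2)))) => [[x [y z]] _ | f _] /=.
  by rewrite !ffunE /= !inordK.
apply/ffunP => -[[|[|[|//]]] i3]; rewrite ffunE /=; congr (f _); apply: val_inj; by rewrite /= ?inordK.
Qed.

End SumsOverFiniteFunctions.

Section EpisodicFacts.
Variable R : realType.
Variables S A : finType.

Lemma maxA_cst (a0 : A) (g : A -> R) c : (forall a, g a = c) -> Defs.maxA a0 g = c.
Proof. by move=> gc; apply: (big_ind (fun x => x = c)) => [|x y -> ->|a _]; rewrite ?maxxx. Qed.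

Lemma is_lambda_min_scalar n (c : R) : is_lambda_min (c%:M : 'M[R]_n.+1) c.
Proof.
split=> [|m /eigenvalueP [v]].
  apply/eigenvalueP; exists (const_mx 1); first by rewrite mul_mx_scalar.
  by apply/eqP => /matrixP /(_ 0 0) /eqP; rewrite !mxE oner_eq0.
rewrite mul_mx_scalar => cv nz_v.
have /eqP : (c - m) *: v = 0 by rewrite scalerBl cv subrr.
by rewrite scaler_eq0 (negbTE nz_v) orbF subr_eq0 => /eqP ->.
Qed.

Lemma tv_bool_le (p q : bool -> R) :
  p true + p false = q true + q false -> tv p q <= `|p true - q true|.
Proof.
move=> mass; have pq_false : p false - q false = - (p true - q true) by lra.
apply: (big_ind (fun x => x <= _)) => [|x y hx hy|E _]; first exact: normr_ge0.
  by rewrite ge_max hx hy.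
rewrite big_mkcond big_bool /=.
by case: (true \in E); case: (false \in E);
  rewrite ?pq_false ?addr0 ?add0r ?addrN ?normrN ?normr0 ?normr_ge0.
Qed.

Variable H : nat.

Lemma policy_avg_le (pi : policy R S A) h s (g : A -> R) c :
  is_policy H pi -> (h < H)%N -> (forall a, g a <= c) -> \sum_a pi h s a * g a <= c.
Proof.
move=> polpi hH gc; have [pi_ge0 pi_sum1] := polpi h hH s.
rewrite -[leRHS]mul1r -pi_sum1 mulr_suml.
by apply: ler_sum => a _; apply: ler_wpM2l.
Qed.

Lemma value_le_Vstar s1 r P (pi : policy R S A) M :
  (forall pi', is_policy H pi' -> value H s1 r P pi' <= M) ->
  is_policy H pi -> value H s1 r P pi <= Vstar H s1 r P.
Proof.
move=> bnd polpi; apply: ub_le_sup; last by exists pi.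
by exists M => _ [pi' [polpi' ->]]; exact: bnd.
Qed.

Lemma traj_prob_ge0 s1 P (pi : policy R S A) (tau : traj S A H) :
  is_kernel H P -> is_policy H pi -> 0 <= traj_prob s1 P pi tau.
Proof.
move=> kerP polpi; apply: mulr_ge0; first exact: ler0n.
apply: prodr_ge0 => h _.
by apply: mulr_ge0; [exact: (polpi h (ltn_ord h) _).1 | exact: (kerP h (ltn_ord h) _ _).1].
Qed.

Lemma traj_prob_eq_on_support s1 P1 P2 (pi : policy R S A) (tau : traj S A H) :
  (forall h s a s', (h < H)%N -> pi h s a != 0 -> P1 h s a s' = P2 h s a s') ->
  traj_prob s1 P1 pi tau = traj_prob s1 P2 pi tau.
Proof.
move=> agree; congr (_ * _); apply: eq_bigr => h _.
have [-> | nz] := eqVneq (pi h (st tau h) (act tau h)) 0; first by rewrite !mul0r.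
by rewrite agree.
Qed.

Lemma data_prob_ge0 T s1 P (pi : policy R S A) (D : data S A H T) :
  is_kernel H P -> is_policy H pi -> 0 <= data_prob s1 P pi D.
Proof. by move=> kerP polpi; apply: prodr_ge0 => t _; exact: traj_prob_ge0. Qed.

Lemma sum_data_prob T s1 P (pi : policy R S A) :
  \sum_(tau : traj S A H) traj_prob s1 P pi tau = 1 -> \sum_(D : data S A H T) data_prob s1 P pi D = 1.
Proof.
move=> sum1; rewrite /data_prob -(bigA_distr_bigA (fun _ tau => traj_prob s1 P pi tau)) /=.
by rewrite big1 // => t _; rewrite sum1.
Qed.

Lemma two_point_lower_bound T s1 r P1 P2 (pi_exp : policy R S A)
    (est : data S A H T -> policy R S A) eps :
  (forall D : data S A H T, data_prob s1 P1 pi_exp D = data_prob s1 P2 pi_exp D) ->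
  (forall D : data S A H T, 0 <= data_prob s1 P1 pi_exp D) ->
  \sum_(D : data S A H T) data_prob s1 P1 pi_exp D = 1 ->
  (forall D, 2 * eps <= (Vstar H s1 r P1 - value H s1 r P1 (est D)) +
                        (Vstar H s1 r P2 - value H s1 r P2 (est D))) ->
  eps <= Num.max (exp_subopt s1 r P1 pi_exp est) (exp_subopt s1 r P2 pi_exp est).
Proof.
move=> same_law law_ge0 law_sum1 gap.
have sum_ge : 2 * eps <= exp_subopt s1 r P1 pi_exp est + exp_subopt s1 r P2 pi_exp est.
  rewrite /exp_subopt -big_split /= -[leLHS]mul1r -{1}law_sum1 mulr_suml.
  apply: ler_sum => D _; rewrite -same_law -mulrDr; apply: ler_wpM2l; [exact: law_ge0 | exact: gap].
rewrite le_max; have [//|lt_sub1] := lerP eps (exp_subopt s1 r P1 pi_exp est).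
by apply/orP; right; lra.
Qed.

End EpisodicFacts.

Section HorizonTwo.
Variable R : realType.
Variables S A : finType.

Lemma sum_traj2 s1 (P : kernel R S A) (pi : policy R S A) (G : S -> A -> S -> A -> R) :
  is_kernel 2 P ->
  \sum_(tau : traj S A 2) traj_prob s1 P pi tau *
     G (st tau ord0) (act tau ord0) (st tau ord_max) (act tau ord_max) =
  \sum_a \sum_y \sum_b pi 0%N s1 a * P 0%N s1 a y * pi 1%N y b * G s1 a y b.
Proof.
move=> kerP.
rewrite -(pair_big xpredT xpredT (fun f g => traj_prob s1 P pi (f, g) *
     G (st (f, g) ord0) (act (f, g) ord0) (st (f, g) ord_max) (act (f, g) ord_max))) /=.
rewrite sum_ffun3.
under [X in X = _]eq_bigr do under eq_bigr do under eq_bigr do rewrite sum_ffun2.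
rewrite /traj_prob /st /act /st_next /=.
under eq_bigr do under eq_bigr do under eq_bigr do under eq_bigr do under eq_bigr do
  rewrite big_ord_recr big_ord_recr big_ord0 /= !ffunE /=.
rewrite (bigD1 s1) //= [X in _ + X]big1 ?addr0; last first.
  by move=> x /negbTE x_s1; do 4 (apply: big1 => ? _); rewrite x_s1 !mul0r.
under eq_bigr do rewrite exchange_big /=.
under eq_bigr do under eq_bigr do rewrite exchange_big /=.
rewrite exchange_big /=; apply: eq_bigr => a _; apply: eq_bigr => y _; apply: eq_bigr => b _.
rewrite (eq_bigr (fun z => pi 0%N s1 a * P 0%N s1 a y * pi 1%N y b * G s1 a y b * P 1%N y b z));
  last by move=> z _; rewrite eqxx /=; ring.
by rewrite -mulr_sumr (kerP 1%N _ y b).2 // mulr1.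
Qed.

Lemma value2 s1 r (P : kernel R S A) (pi : policy R S A) : is_kernel 2 P ->
  value 2 s1 r P pi =
  \sum_a \sum_y \sum_b pi 0%N s1 a * P 0%N s1 a y * pi 1%N y b * (r 0%N s1 a + r 1%N y b).
Proof.
move=> kerP; rewrite -(sum_traj2 _ _ (fun x a y b => r 0%N x a + r 1%N y b)) //.
apply: eq_bigr => tau _; rewrite big_ord_recr big_ord1 /=; congr (_ * (_ + _)).
by congr (r _ (st tau _) (act tau _)); apply: val_inj.
Qed.

Lemma value2_state_reward s1 r (P : kernel R S A) (pi : policy R S A) (g : S -> R) :
  is_kernel 2 P -> is_policy 2 pi -> (forall y b, r 1%N y b = g y) ->
  value 2 s1 r P pi = \sum_a pi 0%N s1 a * (r 0%N s1 a + \sum_y P 0%N s1 a y * g y).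
Proof.
move=> kerP polpi rg; rewrite value2 //; apply: eq_bigr => a _.
have sum_last y : \sum_b pi 0%N s1 a * P 0%N s1 a y * pi 1%N y b * (r 0%N s1 a + r 1%N y b) =
                  pi 0%N s1 a * (P 0%N s1 a y * (r 0%N s1 a + g y)).
  under eq_bigr do rewrite rg mulrAC.
  by rewrite -mulr_sumr (polpi 1%N isT y).2 mulr1 mulrA.
under eq_bigr do rewrite sum_last.
rewrite -mulr_sumr; congr (_ * _).
under eq_bigr do rewrite mulrDr.
by rewrite big_split /= -mulr_suml (kerP 0%N isT s1 a).2 mul1r.
Qed.

End HorizonTwo.

Section HardInstance.
Variable R : realType.
Local Notation action := (bool * bool)%type.

Definition prob_true (dl : R) (a : action) : R :=
  if a.1 then (if a.2 then 1/2 - dl else 1/2 + dl) else (if a.2 then 1 else 0).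
Definition trans (dl : R) : kernel R bool action :=
  fun _ _ a s' => if s' then prob_true dl a else 1 - prob_true dl a.
Definition rew : reward R bool action :=
  fun h s a => if h == 0%N then (if a.1 then 1/2 else 0) else (if s then 1 else 0).
Definition explore : policy R bool action := fun _ _ a => if a.1 then 0 else 1/2.
Definition commit (b : bool) : policy R bool action :=
  fun _ _ a => if a.1 && (a.2 == b) then 1 else 0.
Definition feat (dl : R) (_ : bool) (a : action) : 'cV[R]_2 :=
  \col_(i < 2) (if i == 1 :> nat then prob_true dl a else 1 - prob_true dl a).
Definition mu_unit (_ : nat) (s' : bool) : 'cV[R]_2 := \col_(i < 2) (i == s' :> nat)%:R.

Lemma sum_action (g : action -> R) :
  \sum_a g a = g (true, true) + g (true, false) + (g (false, true) + g (false, false)).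
Proof.
rewrite (_ : \sum_a g a = \sum_x \sum_y g (x, y)); first by rewrite !big_bool.
by rewrite pair_big /=; apply: eq_big => // -[].
Qed.

Lemma prob_true_bounds dl a : `|dl| <= 1/2 -> 0 <= prob_true dl a <= 1.
Proof.
rewrite ler_norml => /andP[dl_lo dl_hi].
by case: a => [[] []]; rewrite /prob_true /=; apply/andP; split; lra.
Qed.

Lemma trans_kernel dl : `|dl| <= 1/2 -> is_kernel 2 (trans dl).
Proof.
move=> small h _ s a; have /andP[p_ge0 p_le1] := prob_true_bounds a small.
by split; [case=> /=; lra | rewrite big_bool /=; ring].
Qed.

Lemma rew_reward : is_reward 2 rew.
Proof. by move=> [|[|//]] _ s a; rewrite /rew /=; [case: a.1 | case: s]; apply/andP; split; lra. Qed.

Lemma explore_policy : is_policy 2 explore.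
Proof.
by move=> h _ s; split=> [a|]; rewrite ?sum_action /explore /=; [case: a.1; lra | field].
Qed.

Lemma commit_policy b : is_policy 2 (commit b).
Proof.
move=> h _ s; split=> [a|]; rewrite ?sum_action /commit /=; first by case: ifP; lra.
by case: b => /=; ring.
Qed.

Lemma tv_trans_le dl h s a : tv (trans dl h s a) (trans 0 h s a) <= `|dl|.
Proof.
apply: le_trans (tv_bool_le _) _; first by rewrite /trans /=; ring.
rewrite /trans /=; case: a => [[] []]; rewrite /prob_true /= ?subrr ?normr0 //.
- by rewrite (_ : _ - _ = - dl) ?normrN //; ring.
- by rewrite (_ : _ - _ = dl) //; ring.
Qed.

Lemma trans_low_rank dl : `|dl| <= 1/2 -> low_rank 2 (trans dl) (feat dl) mu_unit.
Proof.
move=> small; split; [|split].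
- move=> h _ s a s'; rewrite !big_ord_recr big_ord0 /= !mxE /trans.
  by case: s' => /=; ring.
- move=> s a; rewrite -sqrtr1 ler_sqrt ?ler01 // !big_ord_recr big_ord0 /= !mxE /=.
  have /andP[p_ge0 p_le1] := prob_true_bounds a small.
  have : 0 <= prob_true dl a * (1 - prob_true dl a) by apply: mulr_ge0; lra.
  by rewrite add0r; nra.
- move=> h _; rewrite ler_sqrt ?ler0n // !big_ord_recr big_ord0 /= !big_bool /= !mxE /=.
  by rewrite normr0 normr1; lra.
Qed.

Lemma value_trans dl pi : `|dl| <= 1/2 -> is_policy 2 pi ->
  value 2 false rew (trans dl) pi = \sum_a pi 0%N false a * (rew 0 false a + prob_true dl a).
Proof.
move=> small polpi.
rewrite (@value2_state_reward _ _ _ _ _ _ _ (fun y : bool => if y then 1 else 0)) //;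
  last exact: trans_kernel.
by apply: eq_bigr => a _; rewrite big_bool /trans /=; congr (_ * (_ + _)); ring.
Qed.

Lemma Vstar_trans_ge dl : `|dl| <= 1/2 -> 1 + `|dl| <= Vstar 2 false rew (trans dl).
Proof.
move=> small; apply: le_trans (value_le_Vstar (M := 2) _ (commit_policy (dl < 0))).
  rewrite value_trans //; last exact: commit_policy.
  rewrite sum_action /commit /rew /prob_true /=.
  by have [dl_lt0 | dl_ge0] := ltrP dl 0; [rewrite ltr0_norm | rewrite ger0_norm] => //=; lra.
move=> pi polpi; rewrite value_trans //; apply: (policy_avg_le false polpi) => // a.
by have /andP[_ p_le1] := prob_true_bounds a small; rewrite /rew /=; case: a.1; lra.
Qed.

Lemma value_trans_sum_le dl pi : `|dl| <= 1/2 -> is_policy 2 pi ->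
  value 2 false rew (trans dl) pi + value 2 false rew (trans (- dl)) pi <= 2.
Proof.
move=> small polpi; rewrite !value_trans ?normrN // -big_split /=.
under eq_bigr do rewrite -mulrDr.
by apply: (policy_avg_le false polpi) => // -[[] []]; rewrite /rew /prob_true /=; lra.
Qed.

Lemma subopt_sum_ge dl pi : `|dl| <= 1/2 -> is_policy 2 pi ->
  2 * `|dl| <= (Vstar 2 false rew (trans dl) - value 2 false rew (trans dl) pi) +
               (Vstar 2 false rew (trans (- dl)) - value 2 false rew (trans (- dl)) pi).
Proof.
move=> small polpi.
have := Vstar_trans_ge small; have := Vstar_trans_ge (dl := - dl); rewrite normrN.
by move=> /(_ small) Vneg Vpos; have := value_trans_sum_le small polpi; lra.
Qed.

Lemma explore_action_law dl (h : 'I_2) (g : action -> R) : `|dl| <= 1/2 ->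
  \sum_tau traj_prob false (trans dl) explore tau * g (act tau h) =
  (g (false, true) + g (false, false)) / 2.
Proof.
move=> small; have kerP := trans_kernel small.
have [->|->] : h = ord0 \/ h = ord_max.
  by case: h => [[|[|//]] ?]; [left | right]; apply: val_inj.
- rewrite (sum_traj2 _ _ (fun _ a _ _ => g a)) //.
  by rewrite sum_action !big_bool !sum_action /explore /trans /prob_true /=; field.
- rewrite (sum_traj2 _ _ (fun _ _ _ b => g b)) //.
  by rewrite sum_action !big_bool !sum_action /explore /trans /prob_true /=; field.
Qed.

Lemma explore_feat_cov (h : 'I_2) :
  feat_cov false (trans 0) explore (feat 0) h = (1/2)%:M.
Proof.
apply/matrixP => i j; rewrite /feat_cov summxE.
rewrite (eq_bigr (fun tau => traj_prob false (trans 0) explore tau *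
  (feat 0 false (act tau h) i 0 * feat 0 false (act tau h) j 0))); last first.
  by move=> tau _; rewrite !mxE big_ord1 !mxE.
rewrite (explore_action_law h (fun a => feat 0 false a i 0 * feat 0 false a j 0)) ?normr0; last lra.
by rewrite !mxE /prob_true /=; case: i => [[|[|//]] ?]; case: j => [[|[|//]] ?] /=; field.
Qed.

Lemma explore_data_sum1 dl T : `|dl| <= 1/2 ->
  \sum_(D : data bool action 2 T) data_prob false (trans dl) explore D = 1.
Proof.
move=> small; apply: sum_data_prob.
have := explore_action_law ord0 (fun _ => 1) small.
by under eq_bigr do rewrite mulr1; move=> ->; field.
Qed.

Lemma explore_subopt_ge dl T (est : data bool action 2 T -> policy R bool action) :
  `|dl| <= 1/2 -> (forall D, is_policy 2 (est D)) ->
  `|dl| <= Num.max (exp_subopt false rew (trans dl) explore est)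
                   (exp_subopt false rew (trans (- dl)) explore est).
Proof.
move=> small polest; apply: two_point_lower_bound => [D|D||D].
- apply: eq_bigr => t _; apply: traj_prob_eq_on_support => h s a s' _.
  by rewrite /explore /trans /prob_true; case: a.1; rewrite ?eqxx.
- by apply: data_prob_ge0; [exact: trans_kernel | exact: explore_policy].
- exact: explore_data_sum1.
- exact: subopt_sum_ge.
Qed.

Definition f_last : {ffun bool * action -> R} := [ffun sa => if sa.1 then 1 else 0].

Definition Fclass (eps : R) (n : nat) : seq {ffun bool * action -> R} :=
  match n with
  | 0 => [seq bellman (false, false) rew (trans dl) 0 f_last | dl <- [:: 0; eps; - eps]]
  | 1 => [:: f_last]
  | _ => [:: 0]
  end.

Lemma bellman_last P : bellman (false, false) rew P 1 0 = f_last.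
Proof.
apply/ffunP => sa; rewrite !ffunE big1 ?addr0 // => s' _.
by rewrite (@maxA_cst _ _ _ _ 0) ?mulr0 // => a; rewrite ffunE.
Qed.

Lemma bellman_first dl sa :
  bellman (false, false) rew (trans dl) 0 f_last sa = rew 0 sa.1 sa.2 + prob_true dl sa.2.
Proof.
rewrite ffunE big_bool (@maxA_cst _ _ _ _ 1) => [|a]; last by rewrite ffunE.
by rewrite (@maxA_cst _ _ _ _ 0) => [|a]; rewrite ?ffunE // /trans /= mulr1 mulr0 addr0.
Qed.

Lemma Fclass_fun_class eps : `|eps| <= 1/2 -> fun_class 2 (Fclass eps).
Proof.
move=> small; split=> // -[|[|//]] _ f.
- case/mapP => dl dl_in -> sa; rewrite bellman_first.
  have small_dl : `|dl| <= 1/2.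
    by move: dl_in; rewrite !inE => /or3P[] /eqP ->; rewrite ?normrN ?normr0 //; lra.
  have /andP[p_ge0 p_le1] := prob_true_bounds sa.2 small_dl.
  by rewrite /rew /=; case: ifP => _; apply/andP; split; lra.
- by rewrite inE => /eqP -> sa; rewrite ffunE; case: ifP => _; apply/andP; split; lra.
Qed.

Lemma Fclass_complete eps dl : dl \in [:: 0; eps; - eps] ->
  bellman_complete 2 (false, false) rew (trans dl) (Fclass eps).
Proof.
move=> dl_in [|[|//]] _ f; rewrite inE => /eqP ->; first by apply/mapP; exists dl.
by rewrite bellman_last inE.
Qed.

End HardInstance.

Unset Implicit Arguments.

Theorem proposition5 (R : realType) (eps_sim : R) :
  0 <= eps_sim -> eps_sim <= 1 / 2 ->
  exists (S A : finType) (a0 : A) (s1 : S) (H : nat) (r : reward R S A)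
         (Psim P1 P2 : kernel R S A) (F : nat -> seq {ffun S * A -> R}) (d : nat),
    (* well-formed episodic MDPs sharing S, A, r, s1, H *)
    is_reward H r /\ is_kernel H Psim /\ is_kernel H P1 /\ is_kernel H P2 /\
    (* 1. closeness in TV *)
    (forall h, (h < H)%N -> forall s a,
        tv (P1 h s a) (Psim h s a) <= eps_sim /\
        tv (P2 h s a) (Psim h s a) <= eps_sim) /\
    (* real MDPs are low-rank of dimension d *)
    (exists phi mu, low_rank H (d:=d) P1 phi mu) /\
    (exists phi mu, low_rank H (d:=d) P2 phi mu) /\
    (* finite class F, Bellman complete w.r.t. sim and both real MDPs *)
    fun_class H F /\
    bellman_complete H a0 r Psim F /\ bellman_complete H a0 r P1 F /\
    bellman_complete H a0 r P2 F /\
    (* sim is low-rank with features phis, satisfies reachability, and 2. *)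
    (exists (phis : S -> A -> 'cV[R]_d) (mus : nat -> S -> 'cV[R]_d),
       low_rank H (d:=d) Psim phis mus /\
       (exists lam, 0 < lam /\ reachable H s1 Psim phis lam) /\
       exists pi_exp : policy R S A,
         is_policy H pi_exp /\
         (forall h : 'I_H, is_lambda_min (feat_cov s1 Psim pi_exp phis h) (1 / 2)) /\
         forall (T : nat) (est : data S A H T -> policy R S A),
           (forall D, is_policy H (est D)) ->
           eps_sim <= Num.max (exp_subopt s1 r P1 pi_exp est)
                              (exp_subopt s1 r P2 pi_exp est)).
Proof.
move=> eps_ge0 eps_le; have eps_abs : `|eps_sim| = eps_sim := ger0_norm eps_ge0.
have small : `|eps_sim| <= 1/2 by rewrite eps_abs.
have smallN : `|- eps_sim| <= 1/2 by rewrite normrN.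
have small0 : `|0 : R| <= 1/2 by rewrite normr0; lra.
exists bool, (bool * bool)%type, (false, false), false, 2%N, (@rew R),
  (trans 0), (trans eps_sim), (trans (- eps_sim)), (Fclass eps_sim), 2%N.
do 4 (split; first by [exact: rew_reward | exact: trans_kernel]).
split.
  by move=> h _ s a; split; apply: le_trans (tv_trans_le _ _ _ _) _; rewrite ?normrN eps_abs.
do 2 (split; first by eexists; eexists; exact: trans_low_rank).
split; first exact: Fclass_fun_class.
do 3 (split; first by apply: Fclass_complete; rewrite !inE eqxx ?orbT).
exists (feat 0), (mu_unit R); split; first exact: trans_low_rank.
have cov (h : 'I_2) : is_lambda_min (feat_cov false (trans 0) (explore R) (feat 0) h) (1 / 2).
  by rewrite explore_feat_cov; exact: is_lambda_min_scalar.
split.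
  exists (1 / 2); split=> [|h]; first lra.
  by exists (explore R); split; [exact: explore_policy | exists (1 / 2)].
exists (explore R); split; [exact: explore_policy | split; first exact: cov].
by move=> T est polest; rewrite -[leLHS]eps_abs; exact: explore_subopt_ge.
Qed.
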